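(* The map $\mathrm{mult}:\mathcal{F}_1\to\mathcal{F}_0$, $x\otimes y\mapsto xy$, is bounded and satisfies $\mathrm{mult}\,\mathrm{mult}^*=1$; hence it extends to a bounded linear map $L^2(M^2)\to L^2(M)$.
   Context: $M=\ell^\infty\text{-}\bigoplus_{i\in I}M_i$ with $M_i=\mathbb{C}^{d_i\times d_i}$, $M_0$ the finitely supported part, $E^i_{k,l}$ matrix units. $\omega$ is a delta-form: $\omega(x)=\mathrm{tr}_M(x\sigma)$ where $\mathrm{tr}_M(E^i_{k,l})=\delta_{k,l}d_i$ and $\sigma=\sum_i\sigma_i$ ($\sigma_i\in M_i$) is positive invertible with $\mathrm{Tr}(\sigma_i^{-1})=d_i$. $\mathcal{F}_n=M_0^{\otimes(n+1)}$ with inner product $\langle x_0\otimes\cdots\otimes x_n,y_0\otimes\cdots\otimes y_n\rangle=\prod_j\omega(y_j^*x_j)$; $L^2(M^{n+1})$ is its completion. *)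

From HB Require Import structures.
From mathcomp Require Import all_boot all_order all_algebra.
From mathcomp Require Import complex.
From mathcomp Require Import boolp classical_sets cardinality fsbigop reals.
From mathcomp Require Export spectral.

Set Implicit Arguments.
Unset Strict Implicit.
Unset Printing Implicit Defensive.

Import Order.TTheory GRing.Theory Num.Theory.
Local Open Scope ring_scope.
Local Open Scope complex_scope.
Local Open Scope sesquilinear_scope.
Local Open Scope classical_set_scope.

(* Elements of M = l^oo-(+)_i M_i, M_i = C^{d_i x d_i}, are families          *)
(* x : forall i, 'M_(d i).  M_0 = the finitely supported ones.               *)
Definition Mfam (I : Type) (R : realType) (d : I -> nat) :=
  forall i : I, 'M[R[i]]_(d i).

Definition fin_supp (I : Type) (R : realType) (d : I -> nat) (x : Mfam R d) : Prop :=
  finite_set [set i | x i != 0].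

Definition mulM (I : Type) (R : realType) (d : I -> nat) (x y : Mfam R d) : Mfam R d :=
  fun i => x i *m y i.
Definition adjM (I : Type) (R : realType) (d : I -> nat) (x : Mfam R d) : Mfam R d :=
  fun i => (x i) ^t*.

(* tr_M(x) = sum_i d_i Tr(x_i), so that tr_M(E^i_{k,l}) = delta_{k,l} d_i    *)
(* (finitely supported sum; meaningful on M_0).                              *)
Definition trM (I : choiceType) (R : realType) (d : I -> nat) (x : Mfam R d) : R[i] :=
  \sum_(i \in [set: I]) ((d i)%:R * \tr (x i)).

Definition omega (I : choiceType) (R : realType) (d : I -> nat) (sigma : Mfam R d)
  (x : Mfam R d) : R[i] := trM (mulM x sigma).

Definition posmx (R : realType) (n : nat) (A : 'M[R[i]]_n) : Prop :=
  A ^t* = A /\ forall v : 'cV[R[i]]_n, 0 <= (v ^t* *m A *m v) 0 0.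

Definition delta_form (I : Type) (R : realType) (d : I -> nat) (sigma : Mfam R d) : Prop :=
  forall i, [/\ posmx (sigma i), sigma i \in unitmx & \tr (invmx (sigma i)) = (d i)%:R].

Definition ip0 (I : choiceType) (R : realType) (d : I -> nat) (sigma : Mfam R d)
  (x y : Mfam R d) : R[i] := omega sigma (mulM (adjM y) x).

(* Elements of F_1 = M_0 (x) M_0 (algebraic tensor product) are represented *)
(* as finite sums  sum_a x_a (x) y_a, i.e. lists of pairs (x_a, y_a) with    *)
(* x_a, y_a in M_0.                                                          *)
Definition F1_valid (I : Type) (R : realType) (d : I -> nat)
  (s : seq (Mfam R d * Mfam R d)) : Prop :=
  foldr (fun a P => (fin_supp a.1 /\ fin_supp a.2) /\ P) True s.

Definition ip1 (I : choiceType) (R : realType) (d : I -> nat) (sigma : Mfam R d)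
  (s t : seq (Mfam R d * Mfam R d)) : R[i] :=
  \sum_(a <- s) \sum_(b <- t) (ip0 sigma a.1 b.1 * ip0 sigma a.2 b.2).

Definition multM (I : Type) (R : realType) (d : I -> nat)
  (s : seq (Mfam R d * Mfam R d)) : Mfam R d :=
  fun i => \sum_(a <- s) (a.1 i *m a.2 i).

From mathcomp Require Import all_boot all_order all_algebra.
From mathcomp Require Import finmap complex.
From mathcomp Require Import boolp classical_sets cardinality fsbigop reals.
From mathcomp Require Import ring.
Import Order.TTheory GRing.Theory Num.Theory.

Set Implicit Arguments.
Unset Strict Implicit.
Unset Printing Implicit Defensive.

Local Open Scope ring_scope.
Local Open Scope sesquilinear_scope.

(* The adjoint of mult is explicit: writing E_kl for the matrix units of M_i,
     mult^*(eta) = sum_i sum_(k,l) d_i^-1 eta_i sigma_i E_lk sigma_i^-1 (x) E_kl sigma_i^-1,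
   and since sum_(k,l) E_lk A E_kl = Tr(A) 1, the normalisation Tr(sigma_i^-1) = d_i
   gives mult mult^* = 1.  For x in F_1 put u = mult^* mult x; then
   <x, u> = <mult x, mult x> = <u, u>, so positivity of <x - u, x - u> yields
   <mult x, mult x> <= <x, x>, i.e. K = 1.  Positivity on F_1 comes from diagonalising
   each sigma_i: omega(y^* x) is then a finite sum of terms conj(phi y) (phi x), and such
   sums of squares are stable under tensor products and linear extension. *)

Section SumOfSquares.
Variable C : numClosedFieldType.

Definition sos_on (T : Type) (P : T -> Prop) (f : T -> T -> C) :=
  exists X : seq (T -> C),
    forall u v, P u -> P v -> f u v = \sum_(phi <- X) (phi v)^* * phi u.

Lemma sos_on_ext (T : Type) (P : T -> Prop) (f g : T -> T -> C) :
  (forall u v, P u -> P v -> f u v = g u v) -> sos_on P g -> sos_on P f.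
Proof. by move=> fg [X gX]; exists X => u v Pu Pv; rewrite fg ?gX. Qed.

Lemma sos_on_rank1 (T : Type) (P : T -> Prop) (phi : T -> C) :
  sos_on P (fun u v => (phi v)^* * phi u).
Proof. by exists [:: phi] => u v _ _; rewrite big_seq1. Qed.

Lemma sos_on_scale (T : Type) (P : T -> Prop) (c : C) (f : T -> T -> C) :
  0 <= c -> sos_on P f -> sos_on P (fun u v => c * f u v).
Proof.
move=> c_ge0 [X fX]; exists [seq (fun u => sqrtC c * phi u) | phi <- X].
move=> u v Pu Pv; rewrite fX // big_map big_distrr /=; apply: eq_bigr => phi _.
have sqrt_real : (sqrtC c)^* = sqrtC c by rewrite conj_Creal // ger0_real // sqrtC_ge0.
by rewrite rmorphM /= sqrt_real mulrACA -expr2 sqrtCK.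
Qed.

Lemma sos_on_sum (T : Type) (P : T -> Prop) (K : Type) (r : seq K)
    (F : K -> T -> T -> C) :
  (forall k, sos_on P (F k)) -> sos_on P (fun u v => \sum_(k <- r) F k u v).
Proof.
move=> sosF; elim: r => [|k r [X sumX]].
  by exists [::] => u v _ _; rewrite !big_nil.
have [Y FY] := sosF k; exists (Y ++ X) => u v Pu Pv.
by rewrite big_cons big_cat /= FY // sumX.
Qed.

Lemma sos_on_comp (T T' : Type) (P : T -> Prop) (P' : T' -> Prop) (h : T -> T')
    (f : T' -> T' -> C) :
  sos_on P' f -> (forall u, P u -> P' (h u)) ->
  sos_on P (fun u v => f (h u) (h v)).
Proof.
move=> [X fX] hP; exists [seq phi \o h | phi <- X] => u v Pu Pv.
by rewrite big_map; exact: fX (hP _ Pu) (hP _ Pv).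
Qed.

Lemma sos_on_proj_le (T : Type) (P : T -> Prop) (g : T -> T -> C) (s u : T) :
  sos_on P g -> P s -> P u -> g s u = g u u -> g u u <= g s s.
Proof.
move=> [X gX] Ps Pu; rewrite !gX //.
set m := \sum_(phi <- X) (phi u)^* * phi u => su_uu.
have m_ge0 : 0 <= m.
  by apply: sumr_ge0 => phi _; rewrite mulrC mul_conjC_ge0.
have us_su : \sum_(phi <- X) (phi s)^* * phi u = m.
  rewrite -[RHS](conj_Creal (ger0_real m_ge0)) -su_uu rmorph_sum /=.
  by apply: eq_bigr => phi _; rewrite rmorphM /= conjCK mulrC.
have : 0 <= \sum_(phi <- X) (phi s - phi u)^* * (phi s - phi u).
  by apply: sumr_ge0 => phi _; rewrite mulrC mul_conjC_ge0.
have -> : \sum_(phi <- X) (phi s - phi u)^* * (phi s - phi u) =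
    \sum_(phi <- X) (phi s)^* * phi s - \sum_(phi <- X) (phi u)^* * phi s
    - \sum_(phi <- X) (phi s)^* * phi u + m.
  rewrite -!sumrB -big_split /=; apply: eq_bigr => phi _.
  by rewrite rmorphB /=; ring.
by rewrite su_uu us_su subrK subr_ge0.
Qed.

Lemma sos_on_prod (T1 T2 : Type) (P1 : T1 -> Prop) (P2 : T2 -> Prop)
    (f1 : T1 -> T1 -> C) (f2 : T2 -> T2 -> C) :
  sos_on P1 f1 -> sos_on P2 f2 ->
  sos_on (fun x => P1 x.1 /\ P2 x.2) (fun x y => f1 x.1 y.1 * f2 x.2 y.2).
Proof.
move=> [X f1X] [Y f2Y].
exists [seq (fun x => phi x.1 * psi x.2) | phi <- X, psi <- Y].
move=> x y [Px1 Px2] [Py1 Py2]; rewrite big_allpairs_dep f1X // f2Y //.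
rewrite big_distrl /=; apply: eq_bigr => phi _.
rewrite big_distrr /=; apply: eq_bigr => psi _.
by rewrite rmorphM /=; ring.
Qed.

(* [F1_valid] is, by conversion, [all_on] of [fun a => fin_supp a.1 /\ fin_supp a.2]. *)
Definition all_on (T : Type) (P : T -> Prop) (s : seq T) : Prop :=
  foldr (fun a Q => P a /\ Q) True s.

Lemma all_on_sub (T : Type) (P Q : T -> Prop) (s : seq T) :
  (forall x, P x -> Q x) -> all_on P s -> all_on Q s.
Proof. by move=> PQ; elim: s => //= a s IH [Pa Ps]; split; [apply: PQ|apply: IH]. Qed.

Lemma all_on_allpairs_dep (S T : Type) (U : S -> Type) (P : T -> Prop)
    (f : forall x, U x -> T) (r : seq S) (t : forall x, seq (U x)) :
  (forall x y, P (f x y)) -> all_on P [seq f x y | x <- r, y <- t x].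
Proof.
move=> fP; elim: r => //= x r IH; rewrite /all_on foldr_cat.
by elim: (t x) => //= y t' IHt; split.
Qed.

Lemma eq_big_all_on (T : Type) (V : nmodType) (P : T -> Prop) (s : seq T)
    (F G : T -> V) :
  all_on P s -> (forall a, P a -> F a = G a) ->
  \sum_(a <- s) F a = \sum_(a <- s) G a.
Proof.
move=> + FG; elim: s => [|a s IH] /=; first by rewrite !big_nil.
by move=> [Pa Ps]; rewrite !big_cons FG // IH.
Qed.

Lemma sos_on_linear_ext (T : Type) (P : T -> Prop) (k : T -> T -> C) :
  sos_on P k ->
  sos_on (all_on P) (fun s t => \sum_(a <- s) \sum_(b <- t) k a b).
Proof.
move=> [X kX]; exists [seq (fun s => \sum_(a <- s) chi a) | chi <- X].
move=> s t Ps Pt; rewrite big_map.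
rewrite (eq_big_all_on (V := C) (G := fun a => \sum_(b <- t) \sum_(chi <- X)
    (chi b)^* * chi a) Ps); last first.
  by move=> a Pa; apply: (eq_big_all_on (V := C) Pt) => b Pb; rewrite kX.
rewrite (eq_bigr (fun a => \sum_(chi <- X) \sum_(b <- t) (chi b)^* * chi a));
  last by move=> a _; rewrite exchange_big.
rewrite exchange_big /=; apply: eq_bigr => chi _.
rewrite rmorph_sum [RHS]big_distrr /=; apply: eq_bigr => a _.
by rewrite big_distrl.
Qed.

End SumOfSquares.

Section MatrixUnits.
Variable R : pzSemiRingType.

Lemma delta_mx_mulE m n p (k : 'I_m) (l : 'I_n) (X : 'M[R]_(n, p)) i j :
  (delta_mx k l *m X) i j = (i == k)%:R * X l j.
Proof.
rewrite mxE (bigD1 l) //= big1 => [|h /negbTE hl]; rewrite !mxE ?hl ?andbF ?mul0r //.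
by rewrite eqxx andbT addr0.
Qed.

Lemma mulmx_deltaE m n p (k : 'I_n) (l : 'I_p) (X : 'M[R]_(m, n)) i j :
  (X *m delta_mx k l) i j = X i k * (j == l)%:R.
Proof.
rewrite mxE (bigD1 k) //= big1 => [|h /negbTE hk]; rewrite !mxE ?hk ?mulr0 //.
by rewrite eqxx addr0.
Qed.

Lemma mxtrace_delta_mull n (k l : 'I_n) (X : 'M[R]_n) : \tr (delta_mx k l *m X) = X l k.
Proof.
rewrite /mxtrace (bigD1 k) //= big1 => [|p /negbTE pk]; rewrite delta_mx_mulE ?pk ?mul0r //.
by rewrite eqxx mul1r addr0.
Qed.

Lemma sum_delta_conj n (A : 'M[R]_n) :
  \sum_(k < n) \sum_(l < n) delta_mx l k *m A *m delta_mx k l = (\tr A)%:M.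
Proof.
apply/matrixP => p q; rewrite !mxE summxE.
under eq_bigr do rewrite summxE.
rewrite exchange_big (bigD1 p) //= [X in _ + X]big1 => [|l /negbTE lp]; last first.
  by rewrite big1 // => k _; rewrite mulmx_deltaE delta_mx_mulE eq_sym lp !mul0r.
rewrite addr0 -mulr_natr /mxtrace big_distrl /= eq_sym.
by apply: eq_bigr => k _; rewrite mulmx_deltaE delta_mx_mulE eqxx mul1r.
Qed.

End MatrixUnits.

Section BlockComultiplication.
Variables (C : numClosedFieldType) (n : nat).
Implicit Types (sig eta x y : 'M[C]_n).

(* Matrix units with nat indices, so that E_kl can be written in every block
   M_j at once; out of range they are 0. *)
Definition Emx (k l : nat) : 'M[C]_n :=
  \matrix_(p, q) ((p == k :> nat) && (q == l :> nat))%:R.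

Lemma Emx_delta (k l : 'I_n) : Emx k l = delta_mx k l.
Proof. by apply/matrixP => p q; rewrite !mxE. Qed.

Definition comult_left sig eta (k l : nat) : 'M[C]_n :=
  n%:R^-1 *: (eta *m sig *m Emx l k *m invmx sig).

Definition comult_right sig (k l : nat) : 'M[C]_n := Emx k l *m invmx sig.

Lemma comult_block_mul sig eta : sig \in unitmx -> \tr (invmx sig) = n%:R ->
  \sum_(k < n) \sum_(l < n) comult_left sig eta k l *m comult_right sig k l = eta.
Proof.
move=> sig_unit tr_inv; have [n0|n_gt0] := posnP n.
  by apply/matrixP => -[p p_lt]; exfalso; rewrite n0 in p_lt.
have -> : \sum_(k < n) \sum_(l < n) comult_left sig eta k l *m comult_right sig k l =
    n%:R^-1 *: (eta *m sig *m
      (\sum_(k < n) \sum_(l < n) delta_mx l k *m invmx sig *m delta_mx k l) *m invmx sig).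
  rewrite mulmx_sumr mulmx_suml scaler_sumr; apply: eq_bigr => k _.
  rewrite mulmx_sumr mulmx_suml scaler_sumr; apply: eq_bigr => l _.
  by rewrite /comult_left /comult_right !Emx_delta -scalemxAl !mulmxA.
rewrite sum_delta_conj tr_inv mul_mx_scalar -scalemxAl mulmxK //.
by rewrite scalerA mulVf ?scale1r // pnatr_eq0 -lt0n.
Qed.

Lemma hermitian_invmx sig : sig^t* = sig -> (invmx sig)^t* = invmx sig.
Proof. by move=> sig_herm; rewrite trmx_inv map_invmx sig_herm. Qed.

Lemma comult_block_adjoint sig eta x y : sig^t* = sig -> sig \in unitmx ->
  \sum_(k < n) \sum_(l < n)
     (n%:R * \tr ((comult_left sig eta k l)^t* *m x *m sig)) *
     (n%:R * \tr ((comult_right sig k l)^t* *m y *m sig)) =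
  n%:R * \tr (eta^t* *m (x *m y) *m sig).
Proof.
move=> sig_herm sig_unit.
have inv_real : (n%:R^-1 : C)^* = n%:R^-1 by rewrite conj_Creal // realV realn.
have left_tr (k l : 'I_n) : \tr ((comult_left sig eta k l)^t* *m x *m sig) =
    n%:R^-1 * (sig *m eta^t* *m x) l k.
  rewrite /comult_left Emx_delta linearZ /= map_mxZ /= inv_real -!scalemxAl mxtraceZ.
  rewrite !trmx_mul !map_mxM hermitian_invmx // trmx_delta map_delta_mx sig_herm.
  by rewrite mxtrace_mulC !mulmxA mulmxV // mul1mx -!mulmxA mxtrace_delta_mull !mulmxA.
have right_tr (k l : 'I_n) : \tr ((comult_right sig k l)^t* *m y *m sig) = y k l.
  rewrite /comult_right Emx_delta trmx_mul map_mxM hermitian_invmx //.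
  rewrite trmx_delta map_delta_mx mxtrace_mulC !mulmxA mulmxV // mul1mx.
  exact: mxtrace_delta_mull.
under eq_bigr do under eq_bigr do rewrite left_tr right_tr.
have [n0|n_neq0] := eqVneq (n%:R : C) 0.
  by rewrite n0 mul0r big1 // => k _; rewrite big1 // => l _; rewrite !mul0r.
have -> : \tr (eta^t* *m (x *m y) *m sig) =
    \sum_(l < n) \sum_(k < n) (sig *m eta^t* *m x) l k * y k l.
  by rewrite mxtrace_mulC !mulmxA; apply: eq_bigr => l _; rewrite mxE.
rewrite exchange_big big_distrr /=; apply: eq_bigr => k _.
rewrite big_distrr /=; apply: eq_bigr => l _.
by rewrite !mulrA mulfV // mul1r (mulrC _ n%:R).
Qed.

End BlockComultiplication.

Section SpectralTrace.
Variables (C : numClosedFieldType) (n : nat).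

Lemma mxtrace_spectralE (S x y : 'M[C]_n) : S \is normalmx ->
  \tr (y^t* *m x *m S) = \sum_(p < n) \sum_(r < n) spectral_diag S 0 r *
    (((y *m (spectralmx S)^t*) p r)^* * (x *m (spectralmx S)^t*) p r).
Proof.
move=> /orthomx_spectralP; rewrite invmx_unitary ?spectral_unitarymx // => S_eq.
rewrite {1}S_eq !mulmxA mxtrace_mulC !mulmxA.
set P := spectralmx S; set D := spectral_diag S.
have -> : P *m y^t* = (y *m P^t*)^t* by rewrite trmx_mul map_mxM trmxCK.
rewrite -(mulmxA _ x) /mxtrace; under eq_bigr do rewrite mul_mx_diag !mxE big_distrl /=.
rewrite exchange_big /=; apply: eq_bigr => p _; apply: eq_bigr => r _.
by rewrite !mxE mulrC.
Qed.

End SpectralTrace.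

Section PositiveMatrix.
Variables (R : realType) (n : nat).
Implicit Type S : 'M[R[i]]_n.

Lemma posmx_normal S : posmx S -> S \is normalmx.
Proof. by move=> [S_herm _]; apply/normalmxP; rewrite S_herm. Qed.

Lemma posmx_spectral_diag_ge0 S r : posmx S -> 0 <= spectral_diag S 0 r.
Proof.
move=> S_posmx; have /orthomx_spectralP := posmx_normal S_posmx.
have [_ S_pos] := S_posmx.
have P_unitary := spectral_unitarymx S; rewrite invmx_unitary // => S_eq.
set P := spectralmx S in P_unitary S_eq *; set D := spectral_diag S in S_eq *.
have /unitarymxP PP := P_unitary.
have PSP : P *m S *m P^t* = diag_mx D.
  by rewrite S_eq !mulmxA PP mul1mx -mulmxA PP mulmx1.
have := S_pos (P^t* *m ('e_r)^T).
rewrite trmx_mul map_mxM trmxCK trmxK map_delta_mx.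
set e : 'rV_n := 'e_r.
have -> : e *m P *m S *m (P^t* *m e^T) = e *m (P *m S *m P^t*) *m e^T.
  by rewrite !mulmxA.
by rewrite PSP /e trmx_delta mulmx_deltaE delta_mx_mulE !mxE !eqxx mul1r mulr1.
Qed.

Lemma posmx_trace_sos S : posmx S ->
  sos_on (fun _ : 'M[R[i]]_n => True) (fun x y => \tr (y^t* *m x *m S)).
Proof.
move=> S_posmx.
apply: (sos_on_ext (fun x y _ _ => mxtrace_spectralE x y (posmx_normal S_posmx))).
apply: sos_on_sum => p; apply: sos_on_sum => r.
apply: sos_on_scale (posmx_spectral_diag_ge0 r S_posmx) _.
exact: (sos_on_rank1 _ (fun x => (x *m (spectralmx S)^t*) p r)).
Qed.

End PositiveMatrix.

Section DeltaForm.
Variables (I : choiceType) (R : realType) (d : I -> nat) (sigma : Mfam R d).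
Hypothesis sigma_delta : delta_form sigma.
Local Notation M := (Mfam R d).

Definition supported (A : {fset I}) (x : M) := forall i, i \notin A -> x i = 0.

Lemma supported_sub (A B : {fset I}) x :
  supported A x -> (A `<=` B)%fset -> supported B x.
Proof. by move=> xA AB i iB; apply: xA; apply: contra iB; apply: (fsubsetP AB). Qed.

Lemma supported_fin_supp A x : supported A x -> fin_supp x.
Proof.
move=> xA; apply: (sub_finite_set (B := [set` A])); last exact: finite_fset.
by move=> i /= xi; apply: contraNT xi => iA; rewrite xA.
Qed.

Definition suppf (x : M) : {fset I} := fset_set [set i | x i != 0].

Lemma supported_suppf x : fin_supp x -> supported (suppf x) x.
Proof.
move=> x_fin i; rewrite in_fset_set // => xi.
by apply/eqP; apply: contraNT xi => xi; rewrite in_setE.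
Qed.

Definition supported_pair A (a : M * M) := supported A a.1 /\ supported A a.2.

Lemma exists_supported s : F1_valid s -> exists A, all_on (supported_pair A) s.
Proof.
elim: s => [|a s IH] /=; first by exists fset0.
move=> [[a1_fin a2_fin] /IH[A s_A]].
exists (suppf a.1 `|` suppf a.2 `|` A)%fset; split; first split.
- by apply: supported_sub (supported_suppf a1_fin) _; rewrite -fsetUA fsubsetUl.
- by apply: supported_sub (supported_suppf a2_fin) _; rewrite fsetUAC fsubsetUr.
- by apply: all_on_sub s_A => b [b1 b2]; split; apply: supported_sub (fsubsetUr _ _).
Qed.

Lemma supported_multM A s : all_on (supported_pair A) s -> supported A (multM s).
Proof.
move=> s_A i iA; rewrite /multM (eq_big_all_on (G := fun=> 0) s_A) ?big1 //.
by move=> a [a1 _]; rewrite a1 // mul0mx.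
Qed.

Lemma ip0E A x y : supported A y ->
  ip0 sigma x y = \sum_(i <- A) (d i)%:R * \tr ((y i)^t* *m x i *m sigma i).
Proof.
move=> yA; rewrite /ip0 /omega /trM /mulM /adjM; apply: fsbigTE => i /yA ->.
by rewrite trmx0 map_mx0 !mul0mx mxtrace0 mulr0.
Qed.

Lemma ip0_sos A : sos_on (supported A) (ip0 sigma).
Proof.
apply: (sos_on_ext (fun x y _ yA => ip0E x yA)).
apply: sos_on_sum => i; apply: sos_on_scale (ler0n _ _) _.
have [sigma_pos _ _] := sigma_delta i.
exact: (sos_on_comp (h := fun x : M => x i) (posmx_trace_sos sigma_pos)).
Qed.

Definition single_block (i : I) (x : M) : M := fun j => if j == i then x j else 0.

Lemma single_block_supported i x : supported [fset i]%fset (single_block i x).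
Proof. by move=> j; rewrite inE /single_block => /negbTE ->. Qed.

Lemma ip0_single_block x i y :
  ip0 sigma x (single_block i y) = (d i)%:R * \tr ((y i)^t* *m x i *m sigma i).
Proof.
by rewrite (ip0E x (@single_block_supported i y)) big_seq_fset1 /single_block eqxx.
Qed.

Definition comult_term (eta : M) (i : I) (k l : nat) : M * M :=
  (single_block i (fun j => comult_left (sigma j) (eta j) k l),
   single_block i (fun j => comult_right (sigma j) k l)).

Definition comult (eta : M) : seq (M * M) :=
  [seq comult_term eta i (nat_of_ord kl.1) (nat_of_ord kl.2)
  | i <- suppf eta, kl <- enum {: 'I_(d i) * 'I_(d i)}].

Lemma comult_valid eta : F1_valid (comult eta).
Proof.
apply: all_on_allpairs_dep => i kl.
by split; apply: supported_fin_supp; exact: single_block_supported.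
Qed.

Lemma big_comult (V : nmodType) eta (G : M * M -> V) :
  \sum_(a <- comult eta) G a =
  \sum_(i <- suppf eta) \sum_(k < d i) \sum_(l < d i) G (comult_term eta i k l).
Proof.
rewrite big_allpairs_dep; apply: eq_bigr => i _.
by rewrite big_enum pair_big.
Qed.

Lemma ip0_multM_comult eta s : fin_supp eta ->
  ip0 sigma (multM s) eta = ip1 sigma s (comult eta).
Proof.
move=> eta_fin; rewrite (ip0E _ (supported_suppf eta_fin)) /ip1 /multM.
under eq_bigr do rewrite mulmx_sumr mulmx_suml raddf_sum big_distrr /=.
rewrite exchange_big /=; apply: eq_bigr => a _; rewrite big_comult.
apply: eq_bigr => i _; have [[sigma_herm _] sigma_unit _] := sigma_delta i.
under eq_bigr do under eq_bigr do rewrite !ip0_single_block /=.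
by rewrite comult_block_adjoint.
Qed.

Lemma multM_comult eta : fin_supp eta -> forall j, multM (comult eta) j = eta j.
Proof.
move=> eta_fin j; rewrite /multM big_comult.
rewrite (eq_bigr (fun i => if i == j then eta j else 0)) => [|i _].
  have [j_in|j_out] := boolP (j \in suppf eta).
    by rewrite -big_mkcond -big_filter filter_pred1_uniq ?fset_uniq // big_seq1.
  rewrite supported_suppf // big1_seq // => i /= i_in.
  by case: eqP => // ij; rewrite -ij i_in in j_out.
rewrite /comult_term /single_block /=; case: (i =P j) => [<-|/eqP ij].
  have [_ sigma_unit tr_inv] := sigma_delta i.
  by under eq_bigr do under eq_bigr do rewrite eqxx; rewrite comult_block_mul.
by rewrite big1 // => k _; rewrite big1 // => l _; rewrite eq_sym (negbTE ij) mul0mx.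
Qed.

End DeltaForm.

Local Open Scope complex_scope.

Theorem proposition2p4 (I : choiceType) (R : realType) (d : I -> nat)
  (sigma : Mfam R d) :
  delta_form sigma ->
  (* mult : F_1 -> F_0 is bounded *)
  (exists K : R[i], 0 <= K /\
     forall s : seq (Mfam R d * Mfam R d), F1_valid s ->
       ip0 sigma (multM s) (multM s) <= K ^+ 2 * ip1 sigma s s)
  /\
  (* its adjoint mult^* : F_0 -> F_1 exists and mult mult^* = 1 *)
  (exists mstar : Mfam R d -> seq (Mfam R d * Mfam R d),
     forall eta : Mfam R d, fin_supp eta ->
       [/\ F1_valid (mstar eta),
           (forall s : seq (Mfam R d * Mfam R d), F1_valid s ->
              ip0 sigma (multM s) eta = ip1 sigma s (mstar eta))
         & (forall i, multM (mstar eta) i = eta i)]).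
Proof.
move=> sigma_delta; split; last first.
  exists (comult sigma) => eta eta_fin; split.
  - exact: comult_valid.
  - by move=> s _; apply: ip0_multM_comult.
  - exact: multM_comult.
exists 1; split => // s s_valid; rewrite expr1n mul1r.
set m := multM s; set u := comult sigma m.
have [A s_A] := exists_supported s_valid.
have [B u_B] := exists_supported (comult_valid sigma m).
have m_fin : fin_supp m := supported_fin_supp (supported_multM s_A).
have mult_u : multM u = m := functional_extensionality_dep (multM_comult sigma_delta m_fin).
set AB := (A `|` B)%fset.
have on_AB (C : {fset I}) t : (C `<=` AB)%fset ->
    all_on (supported_pair C) t -> all_on (supported_pair AB) t.
  by move=> C_AB; apply: all_on_sub => a [a1 a2]; split; apply: supported_sub C_AB.
have ip1_sos : sos_on (all_on (supported_pair AB)) (ip1 sigma).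
  exact: sos_on_linear_ext (sos_on_prod (ip0_sos sigma_delta AB) (ip0_sos sigma_delta AB)).
have <- : ip1 sigma u u = ip0 sigma m m by rewrite -ip0_multM_comult // mult_u.
apply: (sos_on_proj_le ip1_sos).
- exact: on_AB (fsubsetUl _ _) s_A.
- exact: on_AB (fsubsetUr _ _) u_B.
- by rewrite -!ip0_multM_comult // mult_u.
Qed.
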